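(* For every integer $l\ge1$, let $\mathcal{I}_6(l)$ be the index coding instance on $[4l+1]$ with $A_{2i-1}=\{2j: j\in[2l]\setminus\{i\}\}\cup\{4l+1\}$ and $A_{2i}=\{2i-1\}$ for $i\in[2l]$, and $A_{4l+1}=\{2i-1: i\in[2l]\}$. Then the UMCD algorithm on $\mathcal{I}_6(l)$ outputs $\beta_{\text{UMCD}}(\mathcal{I}_6(l))=2l+1$.
   Context: Instance: side-information sets $A_i\subseteq[m]\setminus\{i\}$, $B_i=[m]\setminus(A_i\cup\{i\})$. For a $0/1$ matrix $\boldsymbol{G}$ with columns indexed by $[m]$, $\boldsymbol{G}_{[k]}^{L}$ is the submatrix of its first $k$ rows and columns $L$; $\mathrm{mcm}(\boldsymbol{G})$ is the maximum number of $1$-entries no two in a common row or column (0 if no columns). UMCD algorithm: $N=[m]$, $k=0$; while $N\ne\emptyset$: $k\leftarrow k+1$; pick $w\in N$ with $|A_w|$ minimal over $N$ (arbitrary tie-breaking); row $k$ of $\boldsymbol{G}$ is the indicator vector of $\{w\}\cup A_w$; remove $w$ from $N$; remove from $N$ every $i$ with $\mathrm{mcm}(\boldsymbol{G}_{[k]}^{\{i\}\cup B_i})=\mathrm{mcm}(\boldsymbol{G}_{[k]}^{B_i})+1$; output $\beta_{\text{UMCD}}=k$. *)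

From mathcomp Require Import all_boot.
Set Implicit Arguments. Unset Strict Implicit. Unset Printing Implicit Defensive.

Section UMCD.
Variable m : nat.
(* An index coding instance on [m] (elements of 'I_m, 0-based: the paper's
   index p corresponds to the ordinal with value p-1). *)
Variable A : 'I_m -> {set 'I_m}.

Definition Bset (i : 'I_m) : {set 'I_m} := ~: (i |: A i).

(* The matrix G given by its list of rows; row r is the support set of the
   r-th row (entry (r,c) is 1 iff c \in row r). *)
Definition is_matching (rows : seq {set 'I_m}) (L : {set 'I_m})
    (M : {set 'I_(size rows) * 'I_m}) : bool :=
  [forall e in M, (e.2 \in L) && (e.2 \in nth set0 rows e.1)] &&
  [forall e in M, forall f in M, ((e.1 == f.1) || (e.2 == f.2)) ==> (e == f)].

Arguments is_matching : clear implicits.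
Definition mcm (rows : seq {set 'I_m}) (L : {set 'I_m}) : nat :=
  \max_(M | is_matching rows L M) #|M|.

(* one update of N after adding row for w (rows already includes it) *)
Definition umcd_step (N : {set 'I_m}) (rows : seq {set 'I_m}) (w : 'I_m) :=
  [set i in N :\ w | mcm rows (i |: Bset i) != (mcm rows (Bset i)).+1].

Definition umcd_state (ws : seq 'I_m) : seq {set 'I_m} * {set 'I_m} :=
  foldl (fun st w => let rows := rcons st.1 (w |: A w) in
                     (rows, umcd_step st.2 rows w)) ([::], setT) ws.

(* ws is a complete run of UMCD (for some tie-breaking): each pick w lies in
   the current N and has minimal |A_w| over N, and N is empty at the end. *)
Definition umcd_run (ws : seq 'I_m) : Prop :=
  (forall p s w, ws = p ++ w :: s ->
     w \in (umcd_state p).2 /\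
     forall v, v \in (umcd_state p).2 -> #|A w| <= #|A v|) /\
  (umcd_state ws).2 = set0.
End UMCD.

Definition I6 (l : nat) (x : 'I_(4 * l + 1)) : {set 'I_(4 * l + 1)} :=
  let p := (val x).+1 in
  if p == 4 * l + 1 then
    [set y : 'I_(4 * l + 1) | [exists i : 'I_(2 * l), (val y).+1 == 2 * i + 1]]
  else if odd p then
    (* p = 2i-1, i = p./2 + 1 ; A_p = {2j : j in [2l] \ {i}} U {4l+1} *)
    [set y : 'I_(4 * l + 1) | [exists j : 'I_(2 * l),
        (val j != p./2) && ((val y).+1 == 2 * (j + 1))] || ((val y).+1 == 4 * l + 1)]
  else
    [set y : 'I_(4 * l + 1) | (val y).+1 == p.-1].

From mathcomp Require Import all_boot zify.
Set Implicit Arguments. Unset Strict Implicit. Unset Printing Implicit Defensive.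

(* In the paper's numbering, UMCD first picks the 2l vertices 2i, whose side
   information {2i-1} is smallest.  Adding a row {2i, 2i-1} never makes the mcm
   on {j} U B_j exceed the mcm on B_j for an unpicked j: the column j meets no
   row, unless j = 2i-1, and then it can be exchanged for 2i, which lies in B_j.
   So after 2l steps N consists of the 2l+1 odd vertices, all with |A| = 2l.
   Whichever is picked next, for every other i in N the 2l+1 rows have a
   matching inside {i} U B_i, while |B_i| = 2l bounds the mcm on B_i; hence N
   becomes empty and UMCD stops after 2l+1 steps. *)

Lemma count_le1_nth (T : Type) (x0 : T) (a : pred T) s i j :
  count a s <= 1 -> i < size s -> j < size s ->
  a (nth x0 s i) -> a (nth x0 s j) -> i = j.
Proof.
elim: s i j => [|x s IHs] [|i] [|j] //= count_le1 i_lt j_lt ai aj.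
- move: count_le1; rewrite ai add1n ltnS leqNgt -has_count.
  by case/negP; apply/(has_nthP x0); exists j.
- move: count_le1; rewrite aj add1n ltnS leqNgt -has_count.
  by case/negP; apply/(has_nthP x0); exists i.
- by congr _.+1; apply: IHs => //; apply: leq_trans count_le1; apply: leq_addl.
Qed.

Lemma card_odd_ord n : #|[set i : 'I_n | odd i]| = n./2.
Proof.
have -> : #|[set i : 'I_n | odd i]| = count odd (iota 0 n).
  rewrite -val_enum_ord count_map -size_filter -(card_uniqP _); last first.
    exact/filter_uniq/enum_uniq.
  by apply: eq_card => i; rewrite inE mem_filter mem_enum andbT.
elim: n => [//|n IHn]; rewrite -addn1 iotaD count_cat IHn /=; lia.
Qed.

Section Matchings.
Variable m : nat.
Implicit Types (rows : seq {set 'I_m}) (L : {set 'I_m}) (c d : 'I_m).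

Lemma is_matchingP rows L (M : {set 'I_(size rows) * 'I_m}) :
  reflect ((forall e, e \in M -> e.2 \in L /\ e.2 \in nth set0 rows e.1) /\
           (forall e f, e \in M -> f \in M ->
              (e.1 == f.1) || (e.2 == f.2) -> e = f))
          (@is_matching _ rows L M).
Proof.
apply: (iffP andP) => [[/forallP edgeM /forallP injM]|[edgeM injM]]; split.
- by move=> e eM; move: (edgeM e); rewrite eM => /andP.
- move=> e f eM fM ef; move: (injM e); rewrite eM => /forallP/(_ f).
  by rewrite fM ef => /eqP.
- by apply/forallP => e; apply/implyP => /edgeM [-> ->].
- apply/forallP => e; apply/implyP => eM; apply/forallP => f.
  by apply/implyP => fM; apply/implyP => ef; apply/eqP; apply: injM.
Qed.

Lemma mcm_ge rows L (M : {set 'I_(size rows) * 'I_m}) :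
  @is_matching _ rows L M -> #|M| <= mcm rows L.
Proof. exact: leq_bigmax_cond. Qed.

Lemma mcm_le rows L n :
  (forall M, @is_matching _ rows L M -> #|M| <= n) -> mcm rows L <= n.
Proof. by move/bigmax_leqP. Qed.

Lemma mcm_le_size rows L : mcm rows L <= size rows.
Proof.
apply: mcm_le => M /is_matchingP [_ injM].
rewrite -(card_in_imset (f := fst)); last first.
  by move=> e f eM fM ef; apply: injM; rewrite // ef eqxx.
by apply: leq_trans (max_card _) _; rewrite card_ord.
Qed.

Lemma mcm_le_card rows L : mcm rows L <= #|L|.
Proof.
apply: mcm_le => M /is_matchingP [edgeM injM].
rewrite -(card_in_imset (f := snd)); last first.
  by move=> e f eM fM ef; apply: injM; rewrite // ef eqxx orbT.
by apply/subset_leq_card/subsetP => _ /imsetP [e /edgeM [eL _] ->].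
Qed.

Lemma mcm_setU1_le rows L c : mcm rows (c |: L) <= (mcm rows L).+1.
Proof.
apply: mcm_le => M /is_matchingP [edgeM injM].
have [e /andP [eM /eqP ec]|no_c] := pickP [pred e | (e \in M) && (e.2 == c)].
  rewrite (cardsD1 e M) eM ltnS; apply: mcm_ge; apply/is_matchingP; split.
    move=> f /setD1P [fe fM]; have [/setU1P [fc|fL] fR] := edgeM f fM => //.
    by case/eqP: fe; apply: injM; rewrite // fc ec eqxx orbT.
  by move=> f g /setD1P [_ fM] /setD1P [_ gM]; apply: injM.
apply/leqW/mcm_ge/is_matchingP; split=> // e eM.
have [/setU1P [ec|eL] eR] := edgeM e eM => //.
by move: (no_c e); rewrite /= eM ec eqxx.
Qed.

Lemma mcm_setU1_unused rows L c :
  all (fun R : {set 'I_m} => c \notin R) rows -> mcm rows (c |: L) <= mcm rows L.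
Proof.
move=> /all_nthP c_unused; apply: mcm_le => M /is_matchingP [edgeM injM].
apply/mcm_ge/is_matchingP; split=> // e eM.
have [/setU1P [ec|eL] eR] := edgeM e eM => //.
by move: (c_unused set0 e.1 (ltn_ord _)); rewrite -ec eR.
Qed.

(* An edge at column c is moved to column d in the same row; as d lies in no
   other row, the result is still a matching. *)
Lemma mcm_setU1_swap rows L c d :
  d \in L -> all (fun R : {set 'I_m} => (c \in R) ==> (d \in R)) rows ->
  count (fun R : {set 'I_m} => d \in R) rows <= 1 -> mcm rows (c |: L) <= mcm rows L.
Proof.
move=> dL /all_nthP c_to_d d_once; apply: mcm_le => M /is_matchingP [edgeM injM].
have d_row_uniq (r r' : 'I_(size rows)) :
    d \in nth set0 rows r -> d \in nth set0 rows r' -> r = r'.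
  move=> dr dr'; apply: val_inj.
  exact: (count_le1_nth d_once (ltn_ord r) (ltn_ord r') dr dr').
pose h (e : 'I_(size rows) * 'I_m) := if e.2 == c then (e.1, d) else e.
have h1 e : (h e).1 = e.1 by rewrite /h; case: ifP.
have h_edge e : e \in M -> (h e).2 \in L /\ (h e).2 \in nth set0 rows e.1.
  move=> eM; have [eL eR] := edgeM e eM; rewrite /h.
  case: eqP => [ec|ec] /=; last by case/setU1P: eL => [/ec|].
  by split=> //; apply: (implyP (c_to_d set0 e.1 (ltn_ord _))); rewrite -ec.
have h_conflict e f : e \in M -> f \in M ->
    ((h e).1 == (h f).1) || ((h e).2 == (h f).2) -> e = f.
  move=> eM fM; rewrite !h1 => /orP [ef1|/eqP ef2]; first by apply: injM; rewrite ?ef1.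
  have [_ eR] := h_edge e eM; have [_ fR] := h_edge f fM.
  have [he_d|he_d] := eqVneq (h e).2 d.
    have e1f1 : e.1 = f.1 by apply: d_row_uniq; rewrite -he_d // ef2.
    by apply: injM; rewrite // e1f1 eqxx.
  have unchanged g : (h g).2 != d -> h g = g.
    by rewrite /h; case: ifP => //= _; rewrite eqxx.
  have he := unchanged e he_d.
  have hf : h f = f by apply: unchanged; rewrite -ef2.
  by apply: injM; rewrite // -he -hf ef2 eqxx orbT.
have h_inj : {in M &, injective h}.
  by move=> e f eM fM hef; apply: h_conflict; rewrite ?hef ?eqxx.
rewrite -(card_in_imset h_inj); apply/mcm_ge/is_matchingP; split.
  by move=> _ /imsetP [e eM ->]; rewrite h1; apply: h_edge.
by move=> _ _ /imsetP [e eM ->] /imsetP [f fM ->] hef; rewrite (h_conflict e f).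
Qed.

Lemma mcm_full (I : Type) (s : seq I) (F : I -> {set 'I_m}) (g : I -> 'I_m) L :
  uniq (map g s) -> all (fun x => (g x \in L) && (g x \in F x)) s ->
  mcm (map F s) L = size s.
Proof.
move=> g_uniq /all_nthP g_edge; apply/eqP.
rewrite eqn_leq -{1}(size_map F) mcm_le_size /=.
case: s g_uniq g_edge => [//|x0 s0]; set s := x0 :: s0 => g_uniq g_edge.
have r_lt (r : 'I_(size (map F s))) : r < size s by rewrite -(size_map F).
pose e (r : 'I_(size (map F s))) := (r, g (nth x0 s r)).
have e_inj : injective e by move=> r r' [].
have e_matching : @is_matching _ (map F s) L [set e r | r in 'I_(size (map F s))].
  apply/is_matchingP; split.
    move=> _ /imsetP [r _ ->]; rewrite (nth_map x0) ?r_lt //.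
    exact/andP/g_edge/r_lt.
  move=> _ _ /imsetP [r _ ->] /imsetP [r' _ ->] /= /orP [/eqP -> //|/eqP grr'].
  have r_lt_g (q : 'I_(size (map F s))) : q < size (map g s).
    by rewrite (size_map g) r_lt.
  congr e; apply/val_inj/eqP.
  rewrite -(nth_uniq (g x0) (r_lt_g r) (r_lt_g r') g_uniq).
  by rewrite !(nth_map x0) ?r_lt // grr'.
apply: leq_trans (mcm_ge e_matching).
by rewrite card_imset // card_ord size_map.
Qed.

End Matchings.

Lemma take_rcons_split (T : Type) (s : seq T) k : k < size s ->
  exists w t, s = take k s ++ w :: t /\ take k.+1 s = rcons (take k s) w.
Proof.
move=> k_lt; case drop_k: (drop k s) => [|w t].
  by move: (size_drop k s); rewrite drop_k /=; lia.
exists w, t; rewrite -drop_k cat_take_drop -addn1 takeD drop_k /= take0 cats1.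
by split.
Qed.

Section Runs.
Variables (m : nat) (A : 'I_m -> {set 'I_m}).
Local Notation rows s := (map (fun w => w |: A w) s).

Lemma umcd_state_rows p : (umcd_state A p).1 = rows p.
Proof.
elim/last_ind: p => [//|p w IHp].
by rewrite /umcd_state foldl_rcons -/(umcd_state A p) IHp map_rcons.
Qed.

Lemma umcd_state_rcons p w :
  (umcd_state A (rcons p w)).2 = umcd_step A (umcd_state A p).2 (rows (rcons p w)) w.
Proof.
by rewrite /umcd_state foldl_rcons -/(umcd_state A p) umcd_state_rows map_rcons.
Qed.

Definition umcd_valid_pick p w : Prop :=
  w \in (umcd_state A p).2 /\
  forall v, v \in (umcd_state A p).2 -> #|A w| <= #|A v|.

Definition umcd_valid_picks ws : Prop :=
  forall p s w, ws = p ++ w :: s -> umcd_valid_pick p w.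

Lemma umcd_valid_picks_nil : umcd_valid_picks [::].
Proof. by case. Qed.

Lemma umcd_valid_picks_rcons ws w :
  umcd_valid_picks ws -> umcd_valid_pick ws w -> umcd_valid_picks (rcons ws w).
Proof.
move=> ws_ok w_ok p s v; case/lastP: s => [|s u].
  by rewrite cats1 => /rcons_inj [<- <-].
by rewrite -rcons_cons -rcons_cat => /rcons_inj [/ws_ok].
Qed.

Lemma umcd_run_doneE ws k : umcd_run A ws ->
  (size ws <= k) = ((umcd_state A (take k ws)).2 == set0).
Proof.
case=> picks_ok N_ws; apply/idP/eqP => [k_ge|N_k]; first by rewrite take_oversize.
rewrite leqNgt; apply/negP => /take_rcons_split [w [s [ws_split _]]].
by have [] := picks_ok _ _ _ ws_split; rewrite N_k inE.
Qed.

Lemma umcd_run_pick ws k : umcd_run A ws -> k < size ws ->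
  exists w, take k.+1 ws = rcons (take k ws) w /\ umcd_valid_pick (take k ws) w.
Proof.
case=> picks_ok _ /take_rcons_split [w [s [ws_split take_w]]].
by exists w; split; last exact: picks_ok ws_split.
Qed.

End Runs.

Section Instance.
Variable l : nat.
Local Notation n := (4 * l + 1).
Local Notation T := 'I_n.
Local Notation A := (@I6 l).
Local Notation odds := [set x : T | odd x].
Local Notation rows s := (map (fun w : T => w |: A w) s).
Implicit Types (x y w c i : T) (p s : seq T) (L : {set T}).

Fact top_subproof : 4 * l < n. Proof. by rewrite addn1. Qed.
Definition top : T := Ordinal top_subproof.

Definition ord_of k : T := insubd top k.

Lemma ord_ofK k : k < n -> ord_of k = k :> nat.
Proof. by move=> k_lt; rewrite val_insubd k_lt. Qed.

(* Ordinal x is the paper's vertex x+1: odd ordinals are the vertices 2i with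
   A = {2i-1}, [top] is 4l+1, and the other even ordinals are the vertices 2i-1. *)
Lemma in_I6 x y : (y \in A x) =
  if x == 4 * l :> nat then ~~ odd y && (y < 4 * l)
  else if odd x then y == x.-1 :> nat
  else (odd y && (y != x.+1 :> nat)) || (y == 4 * l :> nat).
Proof.
have x_lt := ltn_ord x; have y_lt := ltn_ord y.
have top_eq (z : T) : (z.+1 == n) = (z == 4 * l :> nat) by rewrite -addn1 eqn_add2r.
rewrite /I6 /= top_eq; case: ifP => [/eqP x_top|_].
  rewrite inE; apply/existsP/idP => [[i /eqP]|y_even]; first by have := ltn_ord i; lia.
  have i_lt : y./2 < 2 * l by lia.
  by exists (Ordinal i_lt); apply/eqP => /=; lia.
case x_odd: (odd x) => /=; rewrite inE ?top_eq; first by apply/eqP/eqP; lia.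
congr (_ || _).
apply/existsP/idP => [[j /andP [/eqP j_ne /eqP y_eq]]|/andP [y_odd y_ne]].
  by apply/andP; split; [lia | apply/eqP; lia].
have j_lt : y./2 < 2 * l by lia.
by exists (Ordinal j_lt); apply/andP; split; apply/eqP => /=; lia.
Qed.

Lemma in_I6_odd x y : odd x -> (y \in A x) = (y == x.-1 :> nat).
Proof. by move=> x_odd; rewrite in_I6 x_odd; case: eqP => //; lia. Qed.

Lemma in_I6_even x y : ~~ odd x -> x != 4 * l :> nat ->
  (y \in A x) = (odd y && (y != x.+1 :> nat)) || (y == 4 * l :> nat).
Proof. by move=> /negbTE x_even /negbTE x_ne; rewrite in_I6 x_even x_ne. Qed.

Lemma card_odds : #|odds| = 2 * l.
Proof. by rewrite card_odd_ord; lia. Qed.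

Lemma card_I6_odd x : odd x -> #|A x| = 1.
Proof.
move=> x_odd; suff -> : A x = [set ord_of x.-1] by rewrite cards1.
apply/setP => y; rewrite in_I6_odd // inE -val_eqE /= ord_ofK //.
by have := ltn_ord x; lia.
Qed.

Lemma card_I6_even x : ~~ odd x -> #|A x| = 2 * l.
Proof.
move=> x_even; have x_lt := ltn_ord x.
have card_evens : #|~: odds| = (2 * l).+1.
  by have := cardsC odds; rewrite card_ord card_odds; lia.
have [x_top|x_ne] := eqVneq (x : nat) (4 * l).
  have -> : A x = ~: odds :\ top.
    apply/setP => y; rewrite in_I6 x_top eqxx !inE -val_eqE /=.
    by have := ltn_ord y; lia.
  by move: card_evens; rewrite (cardsD1 top) !inE /= oddM add1n => -[].
have x1_lt : x.+1 < n by lia.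
have x1_odd : ord_of x.+1 \in odds by rewrite inE ord_ofK //; lia.
have -> : A x = top |: (odds :\ ord_of x.+1).
  apply/setP => y; rewrite in_I6_even // !inE -!val_eqE /= ord_ofK //.
  by have := ltn_ord y; lia.
have top_new : top \notin odds :\ ord_of x.+1 by rewrite !inE /= oddM andbF.
have := card_odds; rewrite (cardsD1 (ord_of x.+1)) x1_odd add1n => <-.
by rewrite cardsU1 top_new add1n.
Qed.

Lemma card_Bset_even x : ~~ odd x -> #|Bset A x| = 2 * l.
Proof.
move=> x_even; have x_new : x \notin A x.
  by rewrite in_I6 (negbTE x_even); case: ifP => [/eqP|/negbT]; lia.
apply/eqP; rewrite /Bset -(eqn_add2l #|x |: A x|) cardsC card_ord cardsU1 x_new.
by rewrite card_I6_even //=; lia.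
Qed.

Lemma in_row_odd x y :
  odd x -> (y \in x |: A x) = (y == x :> nat) || (y == x.-1 :> nat).
Proof. by move=> x_odd; rewrite !inE in_I6_odd. Qed.

Lemma mcm_odd_rows_setU1 s i : uniq s -> {subset s <= odds} -> i \notin s ->
  mcm (rows s) (i |: Bset A i) <= mcm (rows s) (Bset A i).
Proof.
move=> s_uniq s_odd i_new; have i_lt := ltn_ord i.
have row_s x y : x \in s -> (y \in x |: A x) = (y == x :> nat) || (y == x.-1 :> nat).
  by move=> /s_odd; rewrite inE => x_odd; apply: in_row_odd.
have odd_s x : x \in s -> odd x by move=> /s_odd; rewrite inE.
have [i_unused|] := boolP (odd i || (i == 4 * l :> nat)).
  apply: mcm_setU1_unused; rewrite all_map; apply/allP => x x_s /=.
  have i_ne : i != x :> nat by apply: contraNneq i_new => /val_inj ->.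
  by rewrite row_s //; have := odd_s x x_s; have := ltn_ord x; lia.
rewrite negb_or => /andP [i_even i_ne].
have i1_lt : i.+1 < n by lia.
apply: (mcm_setU1_swap (d := ord_of i.+1)).
- by rewrite !inE in_I6_even // -val_eqE /= ord_ofK //; lia.
- rewrite all_map; apply/allP => x x_s /=; rewrite !row_s // ord_ofK //.
  by have := odd_s x x_s; lia.
rewrite count_map (eq_in_count (a2 := pred1 (ord_of i.+1))).
  by rewrite count_uniq_mem ?leq_b1.
move=> x x_s /=; rewrite row_s // -val_eqE /= ord_ofK //.
by have := odd_s x x_s; lia.
Qed.

Lemma umcd_state_odd_picks s : uniq s -> {subset s <= odds} ->
  (umcd_state A s).2 = [set x | x \notin s].
Proof.
elim/last_ind: s => [|s w IHs]; first by move=> _ _; apply/setP => x; rewrite !inE.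
rewrite rcons_uniq => /andP [w_new s_uniq] sw_odd.
have s_odd : {subset s <= odds}.
  by move=> x x_s; apply: sw_odd; rewrite mem_rcons inE x_s orbT.
rewrite umcd_state_rcons IHs //; apply/setP => i.
rewrite /umcd_step !inE mem_rcons in_cons.
case: eqVneq => [->|i_w] //=; case: (boolP (i \in s)) => //= i_new.
rewrite neq_ltn ltnS mcm_odd_rows_setU1 // ?rcons_uniq ?w_new //.
by rewrite mem_rcons in_cons negb_or i_w.
Qed.

Lemma mcm_odd_rows_last_full p w L (g : T -> T) c :
  uniq p -> {subset p <= odds} -> ~~ odd w -> {in odds &, injective g} ->
  (forall x, odd x -> [&& g x \in L, g x \in x |: A x & g x != c]) ->
  c \in L -> c \in w |: A w -> mcm (rows (rcons p w)) L = (size p).+1.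
Proof.
move=> p_uniq p_odd w_even g_inj g_ok c_L c_w.
have odd_p x : x \in p -> odd x by move=> /p_odd; rewrite inE.
pose g' x := if odd x then g x else c.
have g'_p : {in p, g' =1 g} by move=> x /odd_p x_odd; rewrite /g' x_odd.
rewrite -(size_rcons p w); apply: (mcm_full (g := g')); last first.
  rewrite all_rcons /g' (negbTE w_even) c_L c_w; apply/allP => x /odd_p x_odd.
  by rewrite x_odd; case/and3P: (g_ok x x_odd) => -> ->.
rewrite map_rcons rcons_uniq ((eq_in_map _ _ _).1 g'_p).
rewrite map_inj_in_uniq ?p_uniq ?andbT; last first.
  by apply: sub_in2 g_inj => x /odd_p; rewrite inE.
apply/mapP => -[x /odd_p x_odd]; rewrite /g' (negbTE w_even) => /eqP.
by case/and3P: (g_ok x x_odd) => _ _; rewrite eq_sym => /negbTE ->.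
Qed.

(* Matchings saturating all rows: if w is [top], row x takes x-1 except row i+1,
   which takes i+1, and the last row takes i; if i is [top], row x takes x and
   the last row takes [top]; otherwise row x takes x-1 and the last row i+1. *)
Lemma mcm_last_row_setU1 p w i :
  uniq p -> {subset p <= odds} -> ~~ odd w -> ~~ odd i -> i != w ->
  mcm (rows (rcons p w)) (i |: Bset A i) = (size p).+1.
Proof.
move=> p_uniq p_odd w_even i_even i_w.
have i_lt := ltn_ord i; have w_lt := ltn_ord w.
have i_ne_w : i != w :> nat by [].
have in_L y : (y \in i |: Bset A i) = (y == i) || (y \notin A i).
  by rewrite /Bset !inE; case: eqP.
have [w_top|w_ne] := eqVneq (w : nat) (4 * l).
  have i_ne : i != 4 * l :> nat by move: i_ne_w; rewrite w_top.
  pose g x := if x == i.+1 :> nat then x else ord_of x.-1.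
  apply: (mcm_odd_rows_last_full (g := g) (c := i)) => //.
  - move=> x y; rewrite !inE /g => x_odd y_odd /(congr1 val).
    have := ltn_ord x; have := ltn_ord y.
    case: eqP => x_i; case: eqP => y_i /= y_lt x_lt xy; apply: val_inj => /=;
      by move: xy; rewrite ?ord_ofK; lia.
  - move=> x x_odd; have := ltn_ord x; rewrite /g; case: eqP => x_i x_lt;
      by rewrite in_L in_row_odd // in_I6_even // -!val_eqE /= ?ord_ofK; lia.
  - by rewrite setU11.
  - by rewrite !inE in_I6 w_top eqxx; lia.
have [i_top|i_ne] := eqVneq (i : nat) (4 * l).
  apply: (mcm_odd_rows_last_full (g := id) (c := i)) => //.
  - move=> x x_odd; have := ltn_ord x.
    by rewrite in_L setU11 in_I6 i_top eqxx -val_eqE /=; lia.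
  - by rewrite setU11.
  - by rewrite !inE in_I6_even // -val_eqE /=; lia.
have i1_lt : i.+1 < n by lia.
apply: (mcm_odd_rows_last_full (g := fun x => ord_of x.-1) (c := ord_of i.+1)) => //.
- move=> x y; rewrite !inE => x_odd y_odd /(congr1 val).
  have := ltn_ord x; have := ltn_ord y => y_lt x_lt.
  by move=> /= xy; apply: val_inj => /=; move: xy; rewrite !ord_ofK; lia.
- move=> x x_odd; have := ltn_ord x => x_lt.
  by rewrite in_L in_row_odd // in_I6_even // -!val_eqE /= !ord_ofK; lia.
- by rewrite in_L in_I6_even // -val_eqE /= ord_ofK; lia.
- by rewrite !inE in_I6_even // -val_eqE /= ord_ofK; lia.
Qed.

Lemma size_odd_picks p : uniq p -> p =i odds -> size p = 2 * l.
Proof. by move=> /card_uniqP <- p_odds; rewrite -card_odds; apply: eq_card. Qed.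

Lemma umcd_state_last_pick p w : uniq p -> p =i odds -> ~~ odd w ->
  (umcd_state A (rcons p w)).2 = set0.
Proof.
move=> p_uniq p_odds w_even.
have p_odd : {subset p <= odds} by move=> x; rewrite p_odds.
rewrite umcd_state_rcons umcd_state_odd_picks //; apply/setP => i.
rewrite /umcd_step !inE p_odds inE; case: eqVneq => //= i_w.
case: (boolP (odd i)) => //= i_even; apply/negbTE; rewrite negbK.
have full := mcm_last_row_setU1 p_uniq p_odd w_even i_even i_w.
have le_card := mcm_le_card (rows (rcons p w)) (Bset A i).
have le_succ := mcm_setU1_le (rows (rcons p w)) (Bset A i) i.
rewrite card_Bset_even // in le_card; rewrite full size_odd_picks // in le_succ *.
by apply/eqP; lia.
Qed.

Lemma umcd_valid_picks_odd s : uniq s -> {subset s <= odds} -> umcd_valid_picks A s.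
Proof.
elim/last_ind: s => [|s w IHs]; first by move=> _ _; apply: umcd_valid_picks_nil.
rewrite rcons_uniq => /andP [w_new s_uniq] sw_odd.
have s_odd : {subset s <= odds}.
  by move=> x x_s; apply: sw_odd; rewrite mem_rcons inE x_s orbT.
have w_odd : odd w by have := sw_odd w; rewrite mem_rcons inE eqxx inE; apply.
apply: umcd_valid_picks_rcons; first exact: IHs.
rewrite /umcd_valid_pick umcd_state_odd_picks // inE w_new card_I6_odd //.
split=> // v _; case: (boolP (odd v)) => [v_odd|v_even]; first by rewrite card_I6_odd.
by rewrite card_I6_even //; have := ltn_ord w; lia.
Qed.

Lemma umcd_run_exists : exists ws, umcd_run A ws.
Proof.
have enum_odds : enum odds =i odds by apply: mem_enum.
have top_even : ~~ odd top by rewrite /= oddM.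
exists (rcons (enum odds) top); split; last first.
  exact: umcd_state_last_pick (enum_uniq _) enum_odds top_even.
apply: umcd_valid_picks_rcons.
  by apply: umcd_valid_picks_odd; [exact: enum_uniq | move=> x; rewrite enum_odds].
rewrite /umcd_valid_pick umcd_state_odd_picks ?enum_uniq //; last first.
  by move=> x; rewrite enum_odds.
split=> [|v]; rewrite !inE enum_odds inE //.
by move=> v_even; rewrite !card_I6_even.
Qed.

Lemma umcd_run_take_odd ws k : umcd_run A ws -> k <= 2 * l ->
  [/\ size (take k ws) = k, uniq (take k ws) & {subset take k ws <= odds}].
Proof.
move=> run; elim: k => [_|k IHk k_lt]; first by rewrite take0.
have [size_k uniq_k odd_k] := IHk (ltnW k_lt).
have N_k := umcd_state_odd_picks uniq_k odd_k.
have k_size : k < size ws.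
  rewrite ltnNge (umcd_run_doneE k run) N_k; apply/set0Pn; exists top.
  by rewrite inE; apply/negP => /odd_k; rewrite inE /= oddM.
have [w [take_w [w_N w_min]]] := umcd_run_pick run k_size.
rewrite N_k inE in w_N.
have [v v_odd v_new] : exists2 v : T, odd v & v \notin take k ws.
  have : ~~ (odds \subset [set x in take k ws]).
    apply/negP => /subset_leq_card.
    by rewrite card_odds cardsE (card_uniqP uniq_k) size_k; lia.
  by case/subsetPn => v; rewrite !inE => v_odd v_new; exists v.
have w_odd : odd w.
  have v_N : v \in (umcd_state A (take k ws)).2 by rewrite N_k inE.
  apply: contraLR (w_min v v_N) => w_even.
  by rewrite card_I6_even // card_I6_odd //; lia.
rewrite take_w size_rcons size_k rcons_uniq w_N uniq_k; split=> // x.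
by rewrite mem_rcons inE => /orP [/eqP ->|/odd_k //]; rewrite inE.
Qed.

Lemma size_umcd_run ws : umcd_run A ws -> size ws = 2 * l + 1.
Proof.
move=> run; have [size_p uniq_p odd_p] := umcd_run_take_odd run (leqnn _).
set p := take (2 * l) ws in size_p uniq_p odd_p *.
have p_odds : p =i odds.
  suff odds_p : [set x in p] = odds by move=> x; rewrite -odds_p inE.
  apply/eqP; rewrite eqEcard card_odds cardsE (card_uniqP uniq_p) size_p leqnn andbT.
  by apply/subsetP => x; rewrite inE; apply: odd_p.
have N_p := umcd_state_odd_picks uniq_p odd_p.
have p_size : 2 * l < size ws.
  rewrite ltnNge (umcd_run_doneE _ run) N_p; apply/set0Pn; exists top.
  by rewrite inE p_odds inE /= oddM.
have [w [take_w [w_N _]]] := umcd_run_pick run p_size.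
have w_even : ~~ odd w by move: w_N; rewrite N_p !inE p_odds inE.
apply/eqP; rewrite [2 * l + 1]addn1 eqn_leq p_size andbT.
by rewrite (umcd_run_doneE _ run) take_w umcd_state_last_pick.
Qed.

End Instance.

Theorem proposition8 (l : nat) : 1 <= l ->
  (exists ws, umcd_run (@I6 l) ws) /\
  forall ws, umcd_run (@I6 l) ws -> size ws = 2 * l + 1.
Proof.
by move=> _; split; [exact: umcd_run_exists | exact: size_umcd_run].
Qed.
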